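(* Assume $\operatorname{non}(\mathcal N)=\mathfrak c$. Then $\mathcal{ANM}_{\mathfrak c}\setminus\mathcal{ND}_{\mathfrak c}$ is $2^{\mathfrak c}$-coneable in $\left(\mathbb R^{[0,1]}\right)^{\mathfrak c}$.
   Context: For a regular infinite cardinal $\kappa$, a $\kappa$-sequence $(x_\alpha)_{\alpha<\kappa}$ converges to $x$ if for every neighbourhood $U$ of $x$ there is $\alpha_0<\kappa$ with $x_\alpha\in U$ for all $\alpha_0<\alpha<\kappa$; $\left(\mathbb R^{[0,1]}\right)^{\kappa}$ is the real vector space of $\kappa$-sequences of functions $[0,1]\to\mathbb R$ with indexwise operations. $\lambda$ is Lebesgue measure, $\mathcal N$ the null subsets of $[0,1]$, $\operatorname{non}(\mathcal N)$ the least cardinality of a non-null subset of $[0,1]$, $\mathfrak c=2^{\aleph_0}$. $\mathcal{ANM}_{\kappa}$: $\kappa$-sequences of Lebesgue measurable $f_\alpha:[0,1]\to\mathbb R$ converging a.e. to a measurable $f$ but not converging in measure to $f$ (for some $\varepsilon>0$, $\lambda(\{|f_\alpha-f|\ge\varepsilon\})\not\to0$). $\mathcal{ND}_{\kappa}$: $\kappa$-sequences of Lebesgue measurable $f_\alpha:[0,1]\to\mathbb R$ dominated a.e. by a common integrable $g$, converging a.e. to an integrable $f$, with $\int|f_\alpha-f|\,d\lambda\not\to0$. $S$ is positively (resp. negatively) $\mu$-coneable if there is a linearly independent $B\subset S$ of cardinality $\mu$ all of whose finite combinations with all coefficients $>0$ (resp. $<0$) lie in $S$; $\mu$-coneable means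 both. *)

From HB Require Import structures.
From mathcomp Require Import all_boot all_order all_algebra.
From mathcomp Require Import all_classical all_reals all_analysis.
Import Order.TTheory GRing.Theory Num.Theory.

Set Implicit Arguments.
Unset Strict Implicit.
Unset Printing Implicit Defensive.

Local Open Scope classical_set_scope.
Local Open Scope ring_scope.

(* The real line equipped with the (completed) Lebesgue sigma-algebra,
   i.e. the measurable type on which [completed_lebesgue_measure] lives.
   Measurable functions [LT R -> R] are exactly the Lebesgue-measurable ones. *)
Definition LT (R : realType) :=
  ltac:(let t := type of (@completed_lebesgue_measure R) in
        match t with set ?T -> _ => exact T end).

Notation lam := (@completed_lebesgue_measure _).

(* [I] (with its order) is a well-ordered set of order type the initial
   ordinal c = 2^aleph0 = |R|: a well-order of cardinality |R| all of whose
   proper initial segments have cardinality < |R|. *)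
Definition continuum_index (R : realType) (d : Order.disp_t) (I : orderType d)
    : Prop :=
  well_founded (fun a b : I => (a < b)%O) /\
  ([set: I] #= [set: R])%card /\
  (forall a : I, ~ ([set: R] #<= [set b : I | (b < a)%O])%card).

Definition kconv (R : realType) (d : Order.disp_t) (I : orderType d)
    (u : I -> R) (l : R) : Prop :=
  forall e : R, 0 < e -> exists a0 : I, forall a : I, (a0 < a)%O -> `|u a - l| < e.

Definition kconv0 (R : realType) (d : Order.disp_t) (I : orderType d)
    (u : I -> \bar R) : Prop :=
  forall e : R, 0 < e -> exists a0 : I, forall a : I, (a0 < a)%O ->
    (u a < e%:E)%E.

Section classes.
Variables (R : realType) (d : Order.disp_t) (I : orderType d).

Definition ANM (F : I -> LT R -> R) : Prop :=
  (forall a, measurable_fun (`[0%R, 1%R] : set (LT R)) (F a)) /\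
  exists f : LT R -> R,
    measurable_fun (`[0%R, 1%R] : set (LT R)) f /\
    {ae lam, forall x : LT R, x \in `[0%R, 1%R] ->
        kconv (fun a => F a x) (f x)} /\
    exists e : R, 0 < e /\
      ~ kconv0 (fun a => lam (`[0%R, 1%R] `&` [set x : LT R | e <= `|F a x - f x|])).

Definition ND (F : I -> LT R -> R) : Prop :=
  (forall a, measurable_fun (`[0%R, 1%R] : set (LT R)) (F a)) /\
  (exists g : LT R -> R,
    lam.-integrable (`[0%R, 1%R] : set (LT R)) (EFin \o g) /\
    forall a, {ae lam, forall x : LT R, x \in `[0%R, 1%R] -> `|F a x| <= g x}) /\
  exists f : LT R -> R,
    lam.-integrable (`[0%R, 1%R] : set (LT R)) (EFin \o f) /\
    {ae lam, forall x : LT R, x \in `[0%R, 1%R] ->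
        kconv (fun a => F a x) (f x)} /\
    ~ kconv0 (fun a => (\int[lam]_(x in `[0%R, 1%R]) (`|F a x - f x|)%:E)%E).

(* The ambient vector space (R^[0,1])^I, represented as I-sequences of
   functions R -> R vanishing outside [0,1] (canonically isomorphic). *)
Definition supported01 (F : I -> LT R -> R) : Prop :=
  forall a (x : LT R), x \notin `[0%R, 1%R] -> F a x = 0.

Definition lincomb (n : nat) (c : 'I_n -> R) (b : 'I_n -> I -> LT R -> R)
    : I -> LT R -> R :=
  fun a x => \sum_(i < n) c i * b i a x.

Definition lin_indep (B : set (I -> LT R -> R)) : Prop :=
  forall (n : nat) (c : 'I_n -> R) (b : 'I_n -> I -> LT R -> R),
    injective b -> (forall i, B (b i)) ->
    lincomb c b = (fun _ _ => 0) -> forall i, c i = 0.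

(* S is positively (resp. negatively) mu-coneable, mu = |M| *)
Definition pos_coneable (M : Type) (S : set (I -> LT R -> R)) : Prop :=
  exists B : set (I -> LT R -> R),
    B `<=` S /\ ([set: M] #= B)%card /\ lin_indep B /\
    forall (n : nat) (c : 'I_n.+1 -> R) (b : 'I_n.+1 -> I -> LT R -> R),
      (forall i, B (b i)) -> (forall i, 0 < c i) -> S (lincomb c b).

Definition neg_coneable (M : Type) (S : set (I -> LT R -> R)) : Prop :=
  exists B : set (I -> LT R -> R),
    B `<=` S /\ ([set: M] #= B)%card /\ lin_indep B /\
    forall (n : nat) (c : 'I_n.+1 -> R) (b : 'I_n.+1 -> I -> LT R -> R),
      (forall i, B (b i)) -> (forall i, c i < 0) -> S (lincomb c b).

Definition coneable (M : Type) (S : set (I -> LT R -> R)) : Prop :=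
  pos_coneable M S /\ neg_coneable M S.

End classes.

(* Fix a bijection between the index set I and R, with inverse gR.  The spike
   sequence F_a, equal to x^-2 on (0,1] but switched off at the points x with
   gR x < a, tends to 0 at every x <> 0.  An initial segment of I has fewer
   than c points, so by non(N) = c each F_a equals x^-2 almost everywhere:
   F_a >= 1 on a set of measure bounded below, and no integrable function
   dominates F_a.  Hence every nonzero multiple of the spike is in ANM \ ND.
   The 2^c generators, indexed by the sets S of reals, coincide with the spike
   off the origin; at the origin, term a tests S against a sequence of points
   with prescribed memberships, coded by a.  As |I| = c, every such test is
   coded by some a, so finitely many distinct sets are separated by one index,
   which yields linear independence, while a combination with coefficients of
   one sign is a nonzero multiple of the spike off the origin. *)

From HB Require Import structures.
From mathcomp Require Import all_boot all_order all_algebra.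
From mathcomp Require Import all_classical all_reals all_analysis.
From mathcomp Require Import lra measurable_realfun.
Import Order.TTheory GRing.Theory Num.Theory numFieldTopology.Exports.

Set Implicit Arguments.
Unset Strict Implicit.
Unset Printing Implicit Defensive.

Local Open Scope classical_set_scope.
Local Open Scope ring_scope.

Section real_coding.
Variable R : realType.

Definition rat_cut (x : R) : nat -> bool :=
  fun n => if @unpickle rat n is Some q then ratr q < x else false.

Lemma rat_cut_inj : injective rat_cut.
Proof.
have rat_cut_lt (x y : R) : x < y -> rat_cut x <> rat_cut y.
  move=> xy; have [q] := rat_in_itvoo xy; rewrite in_itv /= => /andP[xq qy].
  move=> /(congr1 (fun c => c (pickle q))); rewrite /rat_cut pickleK qy.
  by rewrite ltNge (ltW xq).
move=> x y exy; apply/eqP; rewrite eq_le !leNgt.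
by apply/andP; split; apply/negP => /rat_cut_lt; [move/(_ (esym exy))|move/(_ exy)].
Qed.

Definition base4_sum (b : nat -> bool) (n : nat) : R :=
  \sum_(k < n) (b k)%:R / 4 ^+ k.+1.

Lemma base4_sumS b n : base4_sum b n.+1 = base4_sum b n + (b n)%:R / 4 ^+ n.+1.
Proof. by rewrite /base4_sum big_ord_recr. Qed.

Lemma base4_sum_le b n k : base4_sum b n <= base4_sum b (n + k).
Proof.
elim: k => [|k IH]; first by rewrite addn0.
by rewrite addnS base4_sumS (le_trans IH)// lerDl divr_ge0// exprn_ge0.
Qed.

(* The tail after n digits is at most sum_(k > n) 4^-k = 3^-1 / 4^n. *)
Lemma base4_sum_tail b n k :
  base4_sum b (n + k) + 3^-1 / 4 ^+ (n + k) <= base4_sum b n + 3^-1 / 4 ^+ n.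
Proof.
elim: k => [|k IH]; first by rewrite addn0.
apply: le_trans IH; rewrite addnS base4_sumS exprS invfM.
have : 0 < (4 ^+ (n + k))^-1 :> R by rewrite invr_gt0 exprn_gt0.
have : (b (n + k))%:R <= 1 :> R by case: (b (n + k)).
have : 0 <= (b (n + k))%:R :> R by [].
move: (4 ^+ _)^-1 ((b _)%:R) => v t t0 t1 v0; nra.
Qed.

Definition base4 (b : nat -> bool) : R := sup (range (base4_sum b)).

Lemma base4_sum_le_base4 b n : base4_sum b n <= base4 b.
Proof.
apply: sup_upper_bound; last by exists n.
split; first by exists (base4_sum b 0), 0%N.
exists 3^-1 => _ [m _ <-]; have := base4_sum_tail b 0 m.
rewrite add0n /base4_sum big_ord0 add0r expr0 divr1 => /(le_trans _); apply.
by rewrite lerDl divr_ge0// exprn_ge0.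
Qed.

Lemma base4_le_sum b n : base4 b <= base4_sum b n + 3^-1 / 4 ^+ n.
Proof.
apply: ge_sup; first by exists (base4_sum b 0), 0%N.
move=> _ [m _ <-]; have [nm|mn] := leqP n m.
  rewrite -(subnKC nm); apply: le_trans (base4_sum_tail b n (m - n)).
  by rewrite lerDl divr_ge0// exprn_ge0.
apply: le_trans (base4_sum_le b m (n - m)) _.
by rewrite subnKC ?(ltnW mn)// lerDl divr_ge0// exprn_ge0.
Qed.

Lemma base4_lt b b' n : (forall k, (k < n)%N -> b k = b' k) ->
  b n = true -> b' n = false -> base4 b' < base4 b.
Proof.
move=> eq_bn bn b'n; apply: le_lt_trans (base4_le_sum b' n.+1) _.
apply: lt_le_trans (base4_sum_le_base4 b n.+1).
rewrite !base4_sumS bn b'n mul0r addr0 mul1r.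
have -> : base4_sum b' n = base4_sum b n.
  by apply: eq_bigr => k _; rewrite eq_bn.
rewrite ltrD2l.
have : 0 < (4 ^+ n.+1)^-1 :> R by rewrite invr_gt0 exprn_gt0.
move: (4 ^+ n.+1)^-1 => v; lra.
Qed.

Lemma base4_inj : injective base4.
Proof.
move=> b b' eqbb'; apply/funext => n; apply/eqP; apply: contraT => neq.
have [m bm_neq m_min] := ex_minnP (ex_intro (fun n => b n != b' n) n neq).
have eq_bm k : (k < m)%N -> b k = b' k.
  by move=> km; apply/eqP; apply: contraTT km => /m_min; rewrite -leqNgt.
move: bm_neq; case bm: (b m); case b'm: (b' m) => // _.
- by have := base4_lt eq_bm bm b'm; rewrite eqbb' ltxx.
- by have := base4_lt (fun k km => esym (eq_bm k km)) b'm bm; rewrite eqbb' ltxx.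
Qed.

Definition code_seq (t : nat -> R * bool) : nat -> bool :=
  fun n => match @unpickle (nat * nat)%type n with
           | Some (k, 0%N) => (t k).2
           | Some (k, m.+1) => rat_cut (t k).1 m
           | None => false
           end.

Lemma code_seq_inj : injective code_seq.
Proof.
move=> t t' eqtt'; apply/funext => k.
have eqk (m : nat) := congr1 (fun c => c (pickle (k, m))) eqtt'; rewrite /code_seq in eqk.
have := eqk 0%N; rewrite !pickleK => eq2.
suff eq1 : (t k).1 = (t' k).1 by case: (t k) (t' k) eq1 eq2 => ? ? [? ?] /= -> ->.
by apply: rat_cut_inj; apply/funext => m; have := eqk m.+1; rewrite !pickleK.
Qed.

Definition decode_seq : R -> nat -> R * bool :=
  pinv_ (fun _ _ => (0, false)) setT (base4 \o code_seq).

Lemma code_seqK : cancel (base4 \o code_seq) decode_seq.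
Proof.
move=> t; apply: pinvKV; rewrite ?inE//.
by move=> t1 t2 _ _ /base4_inj /code_seq_inj.
Qed.

End real_coding.

Definition agrees (T : Type) (S : set T) (t : nat -> T * bool) : Prop :=
  forall k, S (t k).1 <-> (t k).2.

Lemma separating_test (T : Type) (x0 : T) m (S : 'I_m -> set T) :
  injective S -> forall i0, exists t, forall i, agrees (S i) t <-> i = i0.
Proof.
move=> S_inj i0.
have witness k : exists x : T, forall i : 'I_m, val i = k -> i != i0 ->
    ~ (S i x <-> S i0 x).
  have [km|mk] := ltnP k m; last first.
    by exists x0 => j jk; move: (ltn_ord j); rewrite jk ltnNge mk.
  have [<-|ki0] := eqVneq (Ordinal km) i0.
    by exists x0 => i ik; rewrite (_ : i = Ordinal km) ?eqxx//; exact: val_inj.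
  have [x Sx] : exists x, ~ (S (Ordinal km) x <-> S i0 x).
    apply: contrapT => same; move: ki0; apply/negP/negPn/eqP/S_inj.
    by apply/funext => x; apply/propext; apply: contrapT => ?; apply: same; exists x.
  by exists x => i ik _; rewrite (_ : i = Ordinal km) //; exact: val_inj.
have [x xP] := choice witness.
exists (fun k => (x k, `[< S i0 (x k) >])) => i; split => [Si|->]; last first.
  by move=> k /=; rewrite asboolE.
apply/eqP; apply: contraT => ii0; case: (xP i i erefl ii0).
by split => [/Si /asboolP|/asboolP /Si].
Qed.

Section basis_and_cone.
Variables (R : realType) (d : Order.disp_t) (I : orderType d).
Variables (M : Type) (phi : M -> I -> LT R -> R).

Hypothesis phi_dual : forall n (S : 'I_n -> M), injective S ->
  forall i0, exists a x, forall i, phi (S i) a x = (i == i0)%:R.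

Lemma dual_inj : injective phi.
Proof.
move=> m1 m2 eq12; apply: contrapT => neq.
pose S (i : 'I_2) := if val i == 0%N then m1 else m2.
have S_inj : injective S.
  by move=> [[|[|?]] ?] [[|[|?]] ?] //= ?; apply: val_inj => //; exfalso; apply: neq.
have [a [x Sx]] := phi_dual S_inj ord0.
by have := Sx (Ordinal (isT : (1 < 2)%N)); rewrite /= -eq12 (Sx ord0) => /eqP; rewrite oner_eq0.
Qed.

Lemma dual_lin_indep : lin_indep (range phi).
Proof.
move=> n c b b_inj b_phi cb0 i0.
have /choice[S bS] : forall i, exists m, phi m = b i.
  by move=> i; have [m _ <-] := b_phi i; exists m.
have S_inj : injective S by move=> i j eqij; apply: b_inj; rewrite -!bS eqij.
have [a [x Sx]] := phi_dual S_inj i0.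
have := congr1 (fun F => F a x) cb0; rewrite /lincomb /=.
under eq_bigr do rewrite -bS Sx.
rewrite (bigD1 i0)//= eqxx mulr1 big1 ?addr0// => i /negbTE->.
by rewrite mulr0.
Qed.

Lemma coneable_range (S : set (I -> LT R -> R)) :
  (forall n (c : 'I_n.+1 -> R) (s : 'I_n.+1 -> M),
     ((forall i, 0 < c i) \/ (forall i, c i < 0)) -> S (lincomb c (phi \o s))) ->
  coneable M S.
Proof.
move=> S_cone.
have S_comb n c (b : 'I_n.+1 -> I -> LT R -> R) : (forall i, range phi (b i)) ->
    ((forall i, 0 < c i) \/ (forall i, c i < 0)) -> S (lincomb c b).
  move=> b_phi; have /choice[s bs] : forall i, exists m, phi m = b i.
    by move=> i; have [m _ <-] := b_phi i; exists m.
  have -> : b = phi \o s by apply/funext => i; rewrite /= bs.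
  exact: S_cone.
have phiS : range phi `<=` S.
  move=> _ [m _ <-]; have := S_comb 0%N (fun=> 1) (fun=> phi m).
  have -> : lincomb (fun _ : 'I_1 => 1) (fun=> phi m) = phi m.
    by rewrite /lincomb; apply/funext => a; apply/funext => x; rewrite big_ord1 mul1r.
  by apply; [exists m | left].
have card_phi : ([set: M] #= range phi)%card.
  by apply/card_esym/inj_card_eq => m1 m2 _ _; exact: dual_inj.
have indep := dual_lin_indep.
by split; exists (range phi); split=> //; split=> //; split=> // n c b b_phi c_sign;
  apply: S_comb => //; [left | right].
Qed.

End basis_and_cone.

Lemma le_measure_ae d (T : measurableType d) (R : realType)
    (mu : {measure set T -> \bar R}) (A B : set T) :
  measurable A -> measurable B -> {ae mu, forall x, A x -> B x} ->
  (mu A <= mu B)%E.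
Proof.
move=> mA mB [N [mN N0 ABN]].
rewrite -(measureU0 mB mN N0); apply: le_measure; rewrite ?inE//.
  exact: measurableU.
by move=> x Ax; have [Bx|nBx] := pselect (B x); [left | right; apply: ABN => /(_ Ax)].
Qed.

Section inverse_square.
Variable R : realType.

Lemma completed_measurable (A : set R) : measurable A -> measurable (A : set (LT R)).
Proof. exact: sub_caratheodory. Qed.

Lemma completed_measurable_fun (D : set R) (g : R -> R) :
  measurable D -> measurable_fun D g -> measurable_fun (D : set (LT R)) g.
Proof. by move=> mD mg _ Y mY; apply: sub_caratheodory; exact: mg. Qed.

(* Written with [powR] rather than [GRing.inv] to get measurability for free. *)
Definition inv_sq01 (x : R) : R := \1_(`]0, 1] : set R) x * x `^ (-2).

Lemma inv_sq01E (x : R) : 0 < x <= 1 -> inv_sq01 x = (x ^+ 2)^-1.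
Proof.
move=> /andP[x0 x1]; rewrite /inv_sq01 indicE mem_set ?mul1r; last first.
  by rewrite /= in_itv /= x0 x1.
by rewrite powRN powR_mulrn// ltW.
Qed.

Lemma inv_sq01_eq0 (x : R) : ~~ (0 < x <= 1) -> inv_sq01 x = 0.
Proof.
move=> x01; rewrite /inv_sq01 indicE memNset ?mul0r//= in_itv /=.
exact/negP.
Qed.

Lemma inv_sq01_ge (x r : R) : 0 < x -> x <= r -> r <= 1 -> (r ^+ 2)^-1 <= inv_sq01 x.
Proof.
move=> x0 xr r1; rewrite inv_sq01E ?x0 ?(le_trans xr r1)//.
have r0 : 0 < r by exact: lt_le_trans xr.
by rewrite lef_pV2 ?posrE ?exprn_gt0// ler_pXn2r ?nnegrE// ltW.
Qed.

Lemma inv_sq01_ge0 (x : R) : 0 <= inv_sq01 x.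
Proof. by rewrite mulr_ge0 ?powR_ge0// indicE. Qed.

Lemma inv_sq01_measurable : measurable_fun [set: LT R] inv_sq01.
Proof.
apply: completed_measurable_fun => //; apply: measurable_funM.
  exact: measurable_indic.
exact: measurable_powR.
Qed.

Local Notation unit01 := (`[0%R, 1%R]%classic : set (LT R)).

Lemma measurable_unit01 : measurable unit01.
Proof. exact: completed_measurable. Qed.
Local Hint Resolve measurable_unit01 : core.

Lemma lam_itv0r (r : R) : 0 < r -> lam (`]0, r]%classic : set (LT R)) = r%:E.
Proof.
move=> r0; have : lebesgue_measure (`]0, r]%classic : set R) = r%:E.
  by rewrite lebesgue_measure_itv /= lte_fin r0 sube0.
(* The completion agrees with [lebesgue_measure] on Borel sets by conversion. *)
exact.
Qed.

Section inverse_square_multiple.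
Variables (K : R) (h : LT R -> R).
Hypothesis K_neq0 : K != 0.
Hypothesis h_ae : {ae lam, forall x : LT R, x \in `[0%R, 1%R] -> h x = K * inv_sq01 x}.

Lemma inv_sq01_multiple_measurable : measurable_fun unit01 h.
Proof.
apply/measurable_EFinP; apply: (ae_measurable_fun completed_lebesgue_measure_is_complete
  (f := EFin \o (fun x => K * inv_sq01 x))).
  by apply: filterS h_ae => x hx x01; rewrite /= hx// inE.
apply/measurable_EFinP; apply: measurable_funM => //.
exact: measurable_funS inv_sq01_measurable.
Qed.

Lemma inv_sq01_multiple_large :
  ((Num.min 1 `|K|)%:E <= lam (unit01 `&` [set x | (1 <= `|h x - 0|)%R]))%E.
Proof.
set r := Num.min 1 `|K|.
have r0 : 0 < r by rewrite lt_min ltr01 normr_gt0.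
have r1 : r <= 1 by rewrite ge_min lexx.
have rK : r <= `|K| by rewrite ge_min lexx orbT.
rewrite -lam_itv0r //; apply: le_measure_ae.
- exact: completed_measurable (measurable_itv _).
- have m_abs : measurable_fun unit01 (fun x => `|h x - 0|).
    apply: (measurableT_comp (f := @Num.norm _ R) (g := fun x => h x - 0)).
      exact: normr_measurable.
    exact: measurable_funB inv_sq01_multiple_measurable (measurable_cst _).
  by rewrite -preimage_itvcy; apply: m_abs; [exact: measurable_unit01 | exact: measurable_itv].
- apply: filterS h_ae => x hx /=; rewrite in_itv /= => /andP[x0 xr].
  have x01 : x \in `[0%R, 1%R] by rewrite in_itv /= ltW //= (le_trans xr).
  split => //; rewrite hx // subr0 normrM (ger0_norm (inv_sq01_ge0 _)).
  apply: le_trans (ler_wpM2l (normr_ge0 K) (inv_sq01_ge x0 xr r1)).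
  have r2K : r ^+ 2 <= `|K| by rewrite expr2; nra.
  have : r ^+ 2 * (r ^+ 2)^-1 = 1 by rewrite mulfV // expf_neq0 // gt_eqF.
  have : 0 < (r ^+ 2)^-1 by rewrite invr_gt0 exprn_gt0.
  move: (r ^+ 2)^-1 => v; nra.
Qed.

Lemma inv_sq01_multiple_dominator_integral (g : LT R -> R) :
  measurable_fun unit01 g ->
  {ae lam, forall x : LT R, x \in `[0%R, 1%R] -> `|h x| <= g x} ->
  forall n, ((`|K| * n.+1%:R)%:E <= \int[lam]_(x in unit01) `|(EFin \o g) x|)%E.
Proof.
move=> mg h_le_g n.
pose U : set (LT R) := `]0, n.+1%:R^-1]%classic.
have mU : measurable U := completed_measurable (measurable_itv _).
have U01 : U `<=` unit01.
  move=> x; rewrite /U /= !in_itv /= => /andP[x0 x1]; rewrite ltW //=.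
  by rewrite (le_trans x1) // invf_le1 // ler1n.
pose c := `|K| * n.+1%:R ^+ 2.
have c0 : 0 <= c by rewrite mulr_ge0.
have indic_ge0 x : unit01 x -> (0 <= (\1_U x : R)%:E)%E by rewrite lee_fin indicE.
have m_indic : measurable_fun unit01 (fun x => (\1_U x : R)%:E).
  by apply/measurable_EFinP; exact: measurable_indic.
have int_c : (\int[lam]_(x in unit01) (c%:E * (\1_U x)%:E) = (`|K| * n.+1%:R)%:E)%E.
  rewrite (@ge0_integralZl_EFin _ _ _ lam _ measurable_unit01 _ indic_ge0 m_indic _ c0).
  rewrite integral_indic // (setIidl U01).
  rewrite -[X in (_ * X)%E]/(lam U) lam_itv0r ?invr_gt0 // -EFinM.
  by rewrite /c expr2 mulrA mulfK // pnatr_eq0.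
have m_absg : measurable_fun unit01 (fun x => `|(EFin \o g) x|%E).
  have : measurable_fun unit01 (EFin \o (fun x => `|g x|)).
    apply/measurable_EFinP; apply: (measurableT_comp (f := @Num.norm _ R) (g := g)).
      exact: normr_measurable.
    exact: mg.
  exact.
rewrite -int_c; apply: (@ae_ge0_le_integral _ _ _ lam _ measurable_unit01 _ _ _ _ _ m_absg).
- by move=> x /indic_ge0; apply: mule_ge0; rewrite lee_fin.
- exact: measurable_funeM.
- by move=> x _; exact: abse_ge0.
apply: filterS2 h_ae h_le_g => x hx hg x01; rewrite -EFinM lee_fin indicE.
have [xU|] := boolP (x \in U); last by rewrite mulr0.
move: xU; rewrite mulr1 inE /U /= in_itv /= => /andP[x0 xn].
apply: (@le_trans _ _ `|h x|); last exact: le_trans (hg x01) (ler_norm _).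
rewrite hx ?inE // normrM (ger0_norm (inv_sq01_ge0 _)) /c ler_wpM2l //.
by rewrite -[X in X <= _]invrK -exprVn inv_sq01_ge // invf_le1 // ler1n.
Qed.

Lemma inv_sq01_multiple_not_dominated (g : LT R -> R) :
  lam.-integrable unit01 (EFin \o g) ->
  ~ {ae lam, forall x : LT R, x \in `[0%R, 1%R] -> `|h x| <= g x}.
Proof.
move=> /integrableP[/measurable_EFinP mg] + /(inv_sq01_multiple_dominator_integral mg) int_ge.
have int_ge0 : (0 <= \int[lam]_(x in unit01) `|(EFin \o g) x|)%E.
  by apply: integral_ge0 => x _; exact: abse_ge0.
rewrite -ge0_fin_numE // => /fineK; set r := fine _ => int_fin.
have K0 : 0 < `|K| by rewrite normr_gt0.
have := int_ge (Num.truncn (r / `|K|)); rewrite -int_fin lee_fin.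
have := Num.Theory.truncnS_gt (r / `|K|); rewrite ltr_pdivrMr // mulrC.
by move=> /lt_le_trans lt_r /lt_r; rewrite ltxx.
Qed.

End inverse_square_multiple.

Section inverse_square_sequence.
Variables (d : Order.disp_t) (I : orderType d) (F : I -> LT R -> R) (K : R).
Hypothesis I_no_max : forall a : I, exists b, (a < b)%O.
Hypothesis K_neq0 : K != 0.
Hypothesis F_ae : forall a,
  {ae lam, forall x : LT R, x \in `[0%R, 1%R] -> F a x = K * inv_sq01 x}.
Hypothesis F_eventually0 :
  {ae lam, forall x : LT R, exists a0, forall a, (a0 < a)%O -> F a x = 0}.

Lemma inv_sq01_sequence_ANM : ANM F.
Proof.
split=> [a|]; first exact: inv_sq01_multiple_measurable (F_ae a).
exists (fun=> 0); split; first exact: measurable_cst.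
split.
  apply: filterS F_eventually0 => x [a0 Fa0] _ e e0; exists a0 => a /Fa0 ->.
  by rewrite subrr normr0.
exists 1; split => // F_cvg.
have r0 : 0 < Num.min 1 `|K| by rewrite lt_min ltr01 normr_gt0.
have [a0 F_small] := F_cvg _ r0.
have [a a0a] := I_no_max a0.
have := inv_sq01_multiple_large K_neq0 (F_ae a).
by move=> /(lt_le_trans (F_small a a0a)); rewrite ltxx.
Qed.

Lemma inv_sq01_sequence_not_ND (a : I) : ~ ND F.
Proof.
move=> [_ [[g [g_int F_le_g]] _]].
exact: inv_sq01_multiple_not_dominated K_neq0 (F_ae a) g g_int (F_le_g a).
Qed.

End inverse_square_sequence.
End inverse_square.

Lemma injective_card_le T U (A : set T) (B : set U) (h : T -> U) :
  {in A &, injective h} -> h @` A `<=` B -> (A #<= B)%card.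
Proof.
by move=> h_inj hAB; rewrite -(card_le_eql (inj_card_eq h_inj)); exact: subset_card_le.
Qed.

Lemma sum_same_sign_neq0 (R : realType) n (c : 'I_n.+1 -> R) :
  (forall i, 0 < c i) \/ (forall i, c i < 0) -> \sum_i c i != 0.
Proof.
rewrite big_ord_recl => -[c_pos|c_neg].
  have : 0 <= \sum_(i < n) c (lift ord0 i) by apply: sumr_ge0 => i _; exact: ltW.
  by have := c_pos ord0; lra.
have : \sum_(i < n) c (lift ord0 i) <= 0 by apply: sumr_le0 => i _; exact: ltW.
by have := c_neg ord0; lra.
Qed.

Section continuum_cone.
Variables (R : realType) (d : Order.disp_t) (I : orderType d).
Variables (f : I -> R) (gR : R -> I).
Hypothesis gRK : cancel gR f.
Hypothesis I_small : forall a : I, ~ ([set: R] #<= [set b : I | (b < a)%O])%card.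
Hypothesis non_null : forall A : set (LT R), A `<=` `[0%R, 1%R] ->
  ~ ([set: R] #<= A)%card -> lam.-negligible A.

Let gR_inj : injective gR := can_inj gRK.

Lemma I_no_max (a0 : I) : exists a, (a0 < a)%O.
Proof.
apply: contrapT => a0_max; apply: (@I_small a0).
(* [shift] avoids [f a0], the only real that [gR] could send to [a0]. *)
pose shift (x : R) := if x < f a0 then x else x + 1.
apply: (@injective_card_le _ _ _ _ (gR \o shift)).
  by move=> x y _ _ /gR_inj; rewrite /shift; case: (ltP x); case: (ltP y); lra.
move=> _ [x _ <-] /=; rewrite lt_neqAle; apply/andP; split.
  by apply/eqP => /(congr1 f); rewrite gRK /shift; case: ltP; lra.
by rewrite leNgt; apply/negP => lt_a0; apply: a0_max; exists (gR (shift x)).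
Qed.

Lemma early_negligible (a : I) :
  lam.-negligible ([set x | x \in `[0%R, 1%R] /\ (gR x < a)%O] : set (LT R)).
Proof.
apply: non_null => [x [] //|R_le]; apply: (@I_small a).
apply: card_le_trans R_le (injective_card_le (in2W gR_inj) _).
by move=> _ [x [_ lt_a] <-].
Qed.

Definition spike (a : I) (x : R) : R := if (gR x < a)%O then 0 else inv_sq01 x.

Lemma spike_ae (a : I) :
  {ae lam, forall x : LT R, x \in `[0%R, 1%R] -> spike a x = inv_sq01 x}.
Proof.
apply: negligibleS (early_negligible a) => x /= /not_implyP[x01 spike_neq].
by split=> //; apply: contrapT => /negP/negbTE lt_a; apply: spike_neq; rewrite /spike lt_a.
Qed.

Lemma spike_eventually0 (x : R) : exists a0, forall a, (a0 < a)%O -> spike a x = 0.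
Proof. by exists (gR x) => a lt_a; rewrite /spike lt_a. Qed.

Lemma ae_neq0 : {ae lam, forall x : LT R, x != 0}.
Proof.
exists [set 0]; split; first exact: completed_measurable (measurable_set1 _).
  exact: (lebesgue_measure_set1 (0 : R)).
by move=> x /= /negP; rewrite negbK => /eqP.
Qed.

Lemma spike_multiple_class (F : I -> LT R -> R) (K : R) : K != 0 ->
  (forall a (x : LT R), x != 0 -> F a x = K * spike a x) ->
  supported01 F /\ ANM F /\ ~ ND F.
Proof.
move=> K_neq0 F_spike.
have F_ae a : {ae lam, forall x : LT R, x \in `[0%R, 1%R] -> F a x = K * inv_sq01 x}.
  by apply: filterS2 ae_neq0 (spike_ae a) => x x0 spike_x x01; rewrite F_spike// spike_x.
have F_eventually0 : {ae lam, forall x : LT R, exists a0, forall a, (a0 < a)%O -> F a x = 0}.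
  apply: filterS ae_neq0 => x x0; have [a0 spike0] := spike_eventually0 x.
  by exists a0 => a /spike0 spike_ax; rewrite F_spike// spike_ax mulr0.
split; last split.
- move=> a x; rewrite in_itv /= => x01.
  have x0 : x != 0 by apply: contraNneq x01 => ->; rewrite lexx ler01.
  rewrite F_spike// /spike; case: ifP => _; rewrite ?mulr0// inv_sq01_eq0 ?mulr0//.
  by apply: contra x01 => /andP[/ltW -> ->].
- exact: inv_sq01_sequence_ANM I_no_max K_neq0 F_ae F_eventually0.
- exact: inv_sq01_sequence_not_ND K_neq0 F_ae (gR 0).
Qed.

Definition test_of (a : I) : nat -> R * bool := decode_seq (f a).

Lemma test_of_surj (t : nat -> R * bool) : exists a, test_of a = t.
Proof. by exists (gR (base4 R (code_seq t))); rewrite /test_of gRK code_seqK. Qed.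

(* The value at the null point 0 is free: it records whether S passes the
   test coded by a. *)
Definition cone_gen (S : set R) (a : I) (x : LT R) : R :=
  if x == 0 then `[< agrees S (test_of a) >]%:R else spike a x.

Lemma cone_gen_dual n (S : 'I_n -> set R) : injective S ->
  forall i0, exists a x, forall i, cone_gen (S i) a x = (i == i0)%:R.
Proof.
move=> S_inj i0; have [t St] := separating_test 0 S_inj i0.
have [a ta] := test_of_surj t; exists a, 0 => i; rewrite /cone_gen eqxx ta.
suff -> : `[< agrees (S i) t >] = (i == i0) by [].
by apply/idP/eqP => [/asboolP/St|/St/asboolP].
Qed.

Lemma lincomb_cone_gen n (c : 'I_n -> R) (S : 'I_n -> set R) a (x : LT R) :
  x != 0 -> lincomb c (cone_gen \o S) a x = (\sum_i c i) * spike a x.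
Proof.
move=> x0; rewrite /lincomb big_distrl; apply: eq_bigr => i _.
by rewrite /= /cone_gen (negbTE x0).
Qed.

End continuum_cone.

Theorem mainTheorem9 (R : realType) (d : Order.disp_t) (I : orderType d) :
  continuum_index R I ->
  (forall A : set (LT R), A `<=` `[0%R, 1%R] ->
     ~ ([set: R] #<= A)%card -> lam.-negligible A) ->
  coneable (set R)
    [set F : I -> LT R -> R | supported01 F /\ ANM F /\ ~ ND F].
Proof.
move=> [_ [IR I_small]] non_null.
move/card_set_bijP: IR => [f [_ _ f_surj]].
have /choice[gR gRK] : forall x : R, exists a, f a = x.
  by move=> x; have [a _ fa] := f_surj x Logic.I; exists a.
apply: (coneable_range (cone_gen_dual gRK)) => n c S c_sign.
apply: (spike_multiple_class gRK I_small non_null (sum_same_sign_neq0 c_sign)).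
exact: lincomb_cone_gen.
Qed.
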